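(* For every rooted tree $T$, \[\mathcal{P}(T;x,y)=L(T;x,y):=\sum_{A\in\mathcal{A}(T)}x^{\ell(A)}y^{s(A)}.\]
   Context: For a rooted tree $T$ with root $r$, the branches $T_1,\dots,T_k$ are the subtrees obtained by deleting $r$, each rooted at the neighbour of $r$ it contains; $|T|$ is the number of vertices. The polynomial $\mathcal{P}(T;x,y)$ is defined recursively by $\mathcal{P}(T;x,y)=x$ if $T$ has a single vertex, and otherwise $\mathcal{P}(T;x,y)=\prod_{i=1}^k\mathcal{P}(T_i;x,y)+y^{|T|-1}$. An antichain in $T$ is a set of vertices no two of which lie on a common path starting at the root (i.e. no one is an ancestor of another); a maximal antichain is an antichain not properly contained in another antichain; $\mathcal{A}(T)$ is the set of maximal antichains of $T$. A leaf is a vertex with no children (so the root of a one-vertex tree is a leaf). For $A\in\mathcal{A}(T)$, $\ell(A)$ is the number of leaves in $A$, and $s(A)=\sum_{a\in A}(|T_a|-1)$, where $T_a$ is the subtree consisting of $a$ and all its descendants. *)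

From mathcomp Require Import all_boot all_algebra.
Set Implicit Arguments. Unset Strict Implicit. Unset Printing Implicit Defensive.
Import GRing.Theory.
Local Open Scope ring_scope.

Inductive rtree : Type := Node of seq rtree.

Definition branches (t : rtree) : seq rtree := let: Node ts := t in ts.

Fixpoint tsize (t : rtree) : nat :=
  let: Node ts := t in
  S ((fix aux (l : seq rtree) : nat :=
        match l with [::] => 0%N | t' :: l' => (tsize t' + aux l')%N end) ts).

Fixpoint Ppoly (R : comRingType) (x y : R) (t : rtree) : R :=
  let: Node ts := t in
  match ts with
  | [::] => x
  | _ => (fix aux (l : seq rtree) : R :=
            match l with [::] => 1 | t' :: l' => Ppoly x y t' * aux l' end) ts
         + y ^+ (tsize t).-1
  end.

(* Vertices are identified by their address: the sequence of child indices on
   the path from the root (the root has address [::]). *)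
Fixpoint vertices (t : rtree) : seq (seq nat) :=
  let: Node ts := t in
  [::] :: (fix aux (i : nat) (l : seq rtree) : seq (seq nat) :=
             match l with
             | [::] => [::]
             | t' :: l' => map (cons i) (vertices t') ++ aux i.+1 l'
             end) 0%N ts.

Fixpoint subtree (a : seq nat) (t : rtree) : rtree :=
  match a with
  | [::] => t
  | i :: a' => subtree a' (nth t (branches t) i)
  end.

Definition vtx (t : rtree) := 'I_(size (vertices t)).
Definition addr (t : rtree) (v : vtx t) : seq nat := nth [::] (vertices t) v.

Definition anc (t : rtree) (u v : vtx t) : bool := prefix (addr u) (addr v).

Definition antichain (t : rtree) (A : {set vtx t}) : bool :=
  [forall u in A, forall v in A, (u != v) ==> ~~ anc u v].

Definition max_antichain (t : rtree) (A : {set vtx t}) : bool :=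
  antichain A && [forall B : {set vtx t}, (A \proper B) ==> ~~ antichain B].

Definition is_leaf (t : rtree) (v : vtx t) : bool :=
  nilp (branches (subtree (addr v) t)).

Definition nleaves (t : rtree) (A : {set vtx t}) : nat := #|[set a in A | is_leaf a]|.
Definition sA (t : rtree) (A : {set vtx t}) : nat :=
  (\sum_(a in A) (tsize (subtree (addr a) t)).-1)%N.

Definition Lpoly (R : comRingType) (x y : R) (t : rtree) : R :=
  \sum_(A : {set vtx t} | max_antichain A) x ^+ nleaves A * y ^+ sA A.

(* A maximal antichain of a tree with at least one edge is either the root
   alone, contributing y^(|T|-1), or a union of maximal antichains of the
   branches; hence L satisfies L(T) = prod_i L(T_i) + y^(|T|-1), the defining
   recursion of P.  To run this recursion, vertex sets are replaced by lists of
   addresses: both sides equal the sum, over the prefix-free lists of addresses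
   meeting every root-to-leaf path, of the product of the vertex weights
   x^[a is a leaf] * y^(|T_a|-1). *)

From mathcomp Require Import all_boot all_algebra.
Set Implicit Arguments. Unset Strict Implicit. Unset Printing Implicit Defensive.
Import GRing.Theory.
Local Open Scope ring_scope.

Fixpoint subseqs (X : Type) (s : seq X) : seq (seq X) :=
  if s is v :: s' then map (cons v) (subseqs s') ++ subseqs s' else [:: [::]].

Lemma subseqs_map (X Y : Type) (f : X -> Y) (s : seq X) :
  subseqs (map f s) = map (map f) (subseqs s).
Proof.
elim: s => //= v s ->; rewrite map_cat -!map_comp; congr (_ ++ _); exact: eq_map.
Qed.

Section SubseqsEq.
Variable X : eqType.
Implicit Types s S : seq X.

Lemma mem_subseqs s S : S \in subseqs s -> subseq S s.
Proof.
elim: s S => [|v s IH] S /=; first by rewrite inE => /eqP->.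
rewrite mem_cat => /orP[/mapP[S' /IH sub_s ->]|/IH sub_s]; first by rewrite /= eqxx.
exact: subseq_trans sub_s (subseq_cons s v).
Qed.

Lemma filter_mem_subseqs (p : pred X) s : filter p s \in subseqs s.
Proof.
by elim: s => [|v s IH] /=; rewrite ?mem_seq1 // mem_cat; case: (p v); rewrite ?map_f ?IH ?orbT.
Qed.

Lemma uniq_subseqs s : uniq s -> uniq (subseqs s).
Proof.
elim: s => //= v s IH /andP[vNs /IH uniq_s].
rewrite cat_uniq map_inj_uniq ?uniq_s ?andbT //=; last by move=> S S' [].
apply/hasPn => S /mem_subseqs /mem_subseq sub_s; apply/mapP => -[S' _ eqS].
by move: (sub_s v); rewrite eqS mem_head => /(_ isT); apply/negP.
Qed.
End SubseqsEq.

Section BigSubseqs.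
Variables (R : Type) (idx : R).

Lemma big_subseqs_cat (op : Monoid.law idx) (X : Type) (A B : seq X) (h : seq X -> R) :
  \big[op/idx]_(S <- subseqs (A ++ B)) h S =
  \big[op/idx]_(SA <- subseqs A) \big[op/idx]_(SB <- subseqs B) h (SA ++ SB).
Proof.
elim: A h => [|v A IH] h /=; first by rewrite big_seq1.
by rewrite !big_cat !big_map !IH.
Qed.

Lemma big_subseqs_nil (op : Monoid.law idx) (X : eqType) (s : seq X) (h : seq X -> R) :
  \big[op/idx]_(S <- subseqs s | S == [::]) h S = h [::].
Proof.
elim: s => [|v s IH] /=; first by rewrite big_mkcond big_seq1 eqxx.
by rewrite big_cat big_map IH big_pred0 ?Monoid.mul1m.
Qed.

Lemma big_set_subseqs (op : Monoid.com_law idx) (T : finType) (h : {set T} -> R) :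
  \big[op/idx]_(A : {set T}) h A = \big[op/idx]_(S <- subseqs (enum T)) h [set v in S].
Proof.
rewrite -(big_map (fun S => [set v in S]) xpredT); apply: perm_big.
have set_inj : {in subseqs (enum T) &, injective (fun S => [set v in S])}.
  move=> S S' /mem_subseqs/(subseq_uniqP (enum_uniq T)) eqS.
  move=> /mem_subseqs/(subseq_uniqP (enum_uniq T)) eqS' /setP eq_set.
  by rewrite eqS eqS'; apply: eq_filter => v; have := eq_set v; rewrite !inE.
apply: uniq_perm; rewrite ?index_enum_uniq ?map_inj_in_uniq ?uniq_subseqs ?enum_uniq //.
move=> A; rewrite mem_index_enum; apply/esym/mapP.
exists (filter [in A] (enum T)); first exact: filter_mem_subseqs.
by apply/setP => v; rewrite !inE mem_filter mem_enum andbT.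
Qed.
End BigSubseqs.

Section PrefixAntichains.
Variable X : eqType.
Implicit Types (a b : seq X) (V S : seq (seq X)).

Definition prefix_comparable a b := prefix a b || prefix b a.

Definition prefix_free S := all2rel (fun a b => (a == b) || ~~ prefix a b) S.

Definition covers V S := all (fun v => has (prefix_comparable v) S) V.

Definition max_prefix_free V S := prefix_free S && covers V S.

Lemma max_prefix_free_cat A B SA SB :
    {subset SA <= A} -> {subset SB <= B} ->
    {in A & B, forall a b, ~~ prefix_comparable a b} ->
  max_prefix_free (A ++ B) (SA ++ SB) = max_prefix_free A SA && max_prefix_free B SB.
Proof.
move=> sub_A sub_B incomp; rewrite /max_prefix_free.
have incompS : {in SA & SB, forall a b, ~~ prefix a b && ~~ prefix b a}.
  by move=> a b /sub_A aA /sub_B bB; rewrite -negb_or; exact: incomp.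
have -> : prefix_free (SA ++ SB) = prefix_free SA && prefix_free SB.
  rewrite /prefix_free !allrel_catl !allrel_catr.
  have /allrelP-> : {in SA & SB, forall a b, (a == b) || ~~ prefix a b}.
    by move=> a b aSA bSB; case/andP: (incompS a b aSA bSB) => ->; rewrite orbT.
  have /allrelP-> : {in SB & SA, forall a b, (a == b) || ~~ prefix a b}.
    by move=> a b aSB bSA; case/andP: (incompS b a bSA aSB) => _ ->; rewrite orbT.
  by rewrite andbT andTb.
have -> : covers (A ++ B) (SA ++ SB) = covers A SA && covers B SB.
  rewrite /covers all_cat; congr andb; apply: eq_in_all => v v_in; rewrite has_cat.
    suff /negbTE-> : ~~ has (prefix_comparable v) SB by rewrite orbF.
    by apply/hasPn => b /sub_B; exact: incomp.
  suff /negbTE-> : ~~ has (prefix_comparable v) SA by [].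
  by apply/hasPn => a /sub_A aA; rewrite /prefix_comparable orbC; exact: incomp.
by rewrite andbACA.
Qed.

Lemma max_prefix_free_map_cons i V S :
  max_prefix_free (map (cons i) V) (map (cons i) S) = max_prefix_free V S.
Proof.
rewrite /max_prefix_free /prefix_free /covers allrel_mapl allrel_mapr all_map.
congr andb; first by apply: eq_allrel => a b /=; rewrite eqseq_cons eqxx.
apply: eq_all => v /=; rewrite has_map; apply: eq_has => b /=.
by rewrite /prefix_comparable !prefix_cons eqxx.
Qed.

Lemma max_prefix_free_nil V : max_prefix_free V [::] = (V == [::]).
Proof. by case: V. Qed.

Lemma max_prefix_free_root_cons V S : {subset S <= V} -> [::] \notin V ->
  max_prefix_free ([::] :: V) ([::] :: S) = (S == [::]).
Proof.
move=> sub_V rootNV; case: S sub_V => [|b S] sub_V.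
  rewrite /max_prefix_free /= eqxx /covers /=; apply/allP => v _.
  by rewrite /= /prefix_comparable prefix0s orbT.
have b_neq : ([::] == b) = false.
  by apply: contraNF rootNV => /eqP->; apply: sub_V; exact: mem_head.
by rewrite /max_prefix_free /prefix_free allrel_consl /= b_neq prefix0s.
Qed.

Lemma max_prefix_free_root V S :
  max_prefix_free ([::] :: V) S = max_prefix_free V S && (S != [::]).
Proof.
rewrite /max_prefix_free /covers /= -andbA; congr andb; rewrite andbC; congr andb.
by case: S => //= b S; rewrite /prefix_comparable prefix0s.
Qed.
End PrefixAntichains.

Section AntichainSum.
Variables (X : eqType) (R : comPzSemiRingType).
Implicit Types (V : seq (seq X)) (g : seq X -> R).

Definition antichain_sum V g :=
  \sum_(S <- subseqs V | max_prefix_free V S) \prod_(a <- S) g a.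

Lemma antichain_sum_map_cons i V g :
  antichain_sum (map (cons i) V) g = antichain_sum V (fun a => g (i :: a)).
Proof.
rewrite /antichain_sum subseqs_map big_map.
by apply: eq_big => [S|S _]; rewrite ?max_prefix_free_map_cons ?big_map.
Qed.

Lemma antichain_sum_cat A B g : {in A & B, forall a b, ~~ prefix_comparable a b} ->
  antichain_sum (A ++ B) g = antichain_sum A g * antichain_sum B g.
Proof.
move=> incomp; rewrite /antichain_sum big_mkcond big_subseqs_cat big_distrl.
rewrite [RHS]big_mkcond; apply: eq_big_seq => SA /mem_subseqs/mem_subseq sub_A /=.
case: ifP => mpf_A.
  rewrite big_distrr [RHS]big_mkcond; apply: eq_big_seq => SB /mem_subseqs/mem_subseq sub_B /=.
  by rewrite max_prefix_free_cat // mpf_A big_cat; case: ifP.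
apply: big1_seq => SB /andP[_ /mem_subseqs/mem_subseq sub_B].
by rewrite max_prefix_free_cat // mpf_A.
Qed.

Lemma antichain_sum_root V g : [::] \notin V -> V != [::] ->
  antichain_sum ([::] :: V) g = g [::] + antichain_sum V g.
Proof.
move=> rootNV V_neq0; rewrite /antichain_sum /= big_cat big_map /=; congr (_ + _).
  rewrite big_seq_cond (eq_bigl (fun S => (S \in subseqs V) && (S == [::]))).
    by rewrite -big_seq_cond big_subseqs_nil big_seq1.
  move=> S /=; case S_in: (S \in subseqs V) => //=.
  by rewrite max_prefix_free_root_cons // => a; apply/mem_subseq/mem_subseqs.
apply: eq_bigl => S; rewrite max_prefix_free_root.
by case: S => [|b S]; rewrite ?andbT // max_prefix_free_nil (negbTE V_neq0).
Qed.

Lemma antichain_sum_leaf g : antichain_sum [:: [::]] g = g [::].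
Proof. by rewrite /antichain_sum /= !big_cons !big_nil /= mulr1 addr0. Qed.
End AntichainSum.

Lemma rtree_nth_ind (P : rtree -> Prop) :
    (* the default [d] is generic so that the hypothesis also applies to the
       [nth] hidden in [subtree] *)
    (forall ts, (forall d k, (k < size ts)%N -> P (nth d ts k)) -> P (Node ts)) ->
  forall t, P t.
Proof.
move=> IH; fix rec 1 => -[ts]; apply: IH => d.
move: ts; fix rec_ts 1 => -[|t ts] [|k] k_lt.
- discriminate k_lt.
- discriminate k_lt.
- exact: rec.
- exact: rec_ts ts k k_lt.
Qed.

Fixpoint child_vertices (i : nat) (ts : seq rtree) : seq (seq nat) :=
  if ts is t :: ts' then map (cons i) (vertices t) ++ child_vertices i.+1 ts' else [::].

Lemma vertices_Node ts : vertices (Node ts) = [::] :: child_vertices 0 ts.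
Proof. by []. Qed.

Lemma mem_child_vertices i ts a :
  a \in child_vertices i ts -> (a != [::]) && (i <= head 0 a)%N.
Proof.
elim: ts i => //= t ts IH i; rewrite mem_cat => /orP[/mapP[b _ ->]|/IH] /=.
  by rewrite leqnn.
by case/andP=> -> /ltnW.
Qed.

Lemma root_notin_child_vertices i ts : [::] \notin child_vertices i ts.
Proof. by apply/negP => /mem_child_vertices. Qed.

Lemma uniq_vertices t : uniq (vertices t).
Proof.
elim/rtree_nth_ind: t => ts IH; rewrite vertices_Node /= root_notin_child_vertices /=.
elim: ts 0%N IH => //= t ts IHts i IH.
rewrite cat_uniq map_inj_uniq ?(IH t 0%N) //; last by move=> a b [].
rewrite IHts ?andbT => [|d k]; last exact: (IH d k.+1).
apply/hasPn => a /mem_child_vertices /andP[_]; apply: contraTN => /mapP[b _ ->] /=.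
by rewrite ltnn.
Qed.

Lemma antichain_sum_child_vertices (R : comPzSemiRingType) i ts d (g : seq nat -> R) :
  antichain_sum (child_vertices i ts) g =
  \prod_(k < size ts) antichain_sum (vertices (nth d ts k)) (fun a => g ((i + k)%N :: a)).
Proof.
elim: ts i g => [|t ts IH] i g /=.
  by rewrite big_ord0 /antichain_sum /= big_cons big_nil big_nil addr0.
rewrite antichain_sum_cat; last first.
  move=> a b /mapP[a' _ ->] /mem_child_vertices; case: b => //= j b /ltn_eqF ij.
  by rewrite /prefix_comparable !prefix_cons [j == i]eq_sym ij.
rewrite antichain_sum_map_cons IH big_ord_recl addn0; congr (_ * _).
by apply: eq_bigr => k _; rewrite addSnnS.
Qed.

Section PpolySide.
Variables (R : comRingType) (x y : R).

Definition vertex_weight (T : rtree) (a : seq nat) : R :=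
  (if nilp (branches (subtree a T)) then x else 1) * y ^+ (tsize (subtree a T)).-1.

Lemma Ppoly_Node_cons t ts : Ppoly x y (Node (t :: ts)) =
  \prod_(u <- t :: ts) Ppoly x y u + y ^+ (tsize (Node (t :: ts))).-1.
Proof.
rewrite /= big_cons; congr (_ * _ + _).
by elim: ts => [|u ts IH]; rewrite ?big_nil //= big_cons -IH.
Qed.

Lemma Ppoly_antichain_sum T : Ppoly x y T = antichain_sum (vertices T) (vertex_weight T).
Proof.
elim/rtree_nth_ind: T => -[_|t ts IH].
  by rewrite antichain_sum_leaf /vertex_weight /= mulr1.
have children_neq0 : child_vertices 0 (t :: ts) != [::] by case: {IH} t.
rewrite Ppoly_Node_cons vertices_Node antichain_sum_root ?root_notin_child_vertices //.
rewrite addrC /vertex_weight mul1r; congr (_ + _).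
rewrite (antichain_sum_child_vertices _ _ (Node (t :: ts))).
(* [vertex_weight (Node (t :: ts)) (k :: a)] reduces to
   [vertex_weight (nth (Node (t :: ts)) (t :: ts) k) a]. *)
rewrite (big_nth (Node (t :: ts))) big_mkord; apply: eq_bigr => k _; exact: IH.
Qed.
End PpolySide.

Section VertexSets.
Variable T : rtree.

Lemma addr_inj : injective (@addr T).
Proof.
by move=> u v /eqP; rewrite /addr nth_uniq ?uniq_vertices // => /eqP/val_inj.
Qed.

Lemma map_addr_enum : map (@addr T) (enum (vtx T)) = vertices T.
Proof.
rewrite (_ : map _ _ = map (nth [::] (vertices T)) (map val (enum (vtx T)))).
  by rewrite val_enum_ord map_nth_iota0 // take_size.
by rewrite -map_comp.
Qed.

Lemma max_antichainE (A : {set vtx T}) :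
  max_antichain A = antichain A && [forall w, [exists u in A, anc u w || anc w u]].
Proof.
rewrite /max_antichain; case anti_A: (antichain A) => //=.
apply/forallP/forallP => [maxA w | coverA B].
  apply: contraT => /exists_inPn incomp_w.
  have wNA : w \notin A by apply/negP => /incomp_w; rewrite /anc prefix_refl.
  suff anti_wA : antichain (w |: A).
    by move/implyP: (maxA (w |: A)); rewrite properUr ?sub1set // anti_wA => /(_ isT).
  apply/forall_inP => u /setU1P u_in; apply/forall_inP => v /setU1P v_in.
  apply/implyP; case: u_in v_in => [->|uA] [->|vA] uv.
  - by rewrite eqxx in uv.
  - by move: (incomp_w v vA); rewrite negb_or => /andP[_].
  - by move: (incomp_w u uA); rewrite negb_or => /andP[].
  - by move/forall_inP: anti_A => /(_ u uA)/forall_inP/(_ v vA)/implyP; apply.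
apply/implyP => /properP[/subsetP sub_AB [w wB wNA]].
have /exists_inP[u uA cmp_uw] := coverA w.
have uB := sub_AB u uA.
have uw : u != w by apply: contraNneq wNA => <-.
apply/negP => /forall_inP anti_B.
case/orP: cmp_uw => [anc_uw|anc_wu].
  by move/forall_inP: (anti_B u uB) => /(_ w wB); rewrite uw anc_uw.
by move/forall_inP: (anti_B w wB) => /(_ u uB); rewrite eq_sym uw anc_wu.
Qed.

Lemma antichain_set_seq (S : seq (vtx T)) :
  antichain [set v in S] = prefix_free (map (@addr T) S).
Proof.
rewrite /antichain /prefix_free allrel_mapl allrel_mapr.
apply/forall_inP/allrelP => [anti u v uS vS | anti u].
  have := anti u; rewrite inE => /(_ uS)/forall_inP/(_ v); rewrite inE => /(_ vS).
  by rewrite (inj_eq addr_inj); case: (u == v).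
rewrite inE => uS; apply/forall_inP => v; rewrite inE => vS.
by move: (anti u v uS vS); rewrite (inj_eq addr_inj); case: (u == v).
Qed.

Lemma covers_set_seq (S : seq (vtx T)) :
  [forall w, [exists u in [set v in S], anc u w || anc w u]] =
  covers (vertices T) (map (@addr T) S).
Proof.
rewrite -[X in covers X _]map_addr_enum /covers all_map.
apply/forallP/allP => [cover w _ | cover w] /=.
  have /exists_inP[u uS cmp_uw] := cover w; apply/hasP; exists (addr u).
    by apply: map_f; rewrite inE in uS.
  by rewrite /prefix_comparable orbC.
have /hasP[_ /mapP[u uS ->] cmp_wu] := cover w (mem_enum _ w).
by apply/exists_inP; exists u; rewrite ?inE // orbC.
Qed.

Lemma max_antichain_set_seq (S : seq (vtx T)) :
  max_antichain [set v in S] = max_prefix_free (vertices T) (map (@addr T) S).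
Proof. by rewrite max_antichainE antichain_set_seq covers_set_seq. Qed.

Lemma weight_set_seq (R : comRingType) (x y : R) (S : seq (vtx T)) : uniq S ->
  x ^+ nleaves [set v in S] * y ^+ sA [set v in S] =
  \prod_(u <- S) vertex_weight x y T (addr u).
Proof.
move=> uniq_S.
have -> : nleaves [set v in S] = count (@is_leaf T) S.
  rewrite /nleaves -size_filter -(card_uniqP (filter_uniq _ uniq_S)).
  by apply: eq_card => u; rewrite !inE mem_filter andbC.
have -> : sA [set v in S] = (\sum_(u <- S) (tsize (subtree (addr u) T)).-1)%N.
  by rewrite /sA big_uniq //; apply: eq_bigl => u; rewrite inE.
elim: S {uniq_S} => [|v S IH]; first by rewrite !big_nil mulr1.
rewrite /= !big_cons !exprD mulrACA -IH; congr (_ * _).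
by rewrite /vertex_weight /is_leaf; case: nilp.
Qed.

Lemma Lpoly_antichain_sum (R : comRingType) (x y : R) :
  Lpoly x y T = antichain_sum (vertices T) (vertex_weight x y T).
Proof.
rewrite /Lpoly /antichain_sum big_mkcond big_set_subseqs [RHS]big_mkcond.
have -> : subseqs (vertices T) = map (map (@addr T)) (subseqs (enum (vtx T))).
  by rewrite -subseqs_map map_addr_enum.
rewrite big_map; apply: eq_big_seq => S /mem_subseqs/subseq_uniq/(_ (enum_uniq _)) uniq_S.
by rewrite max_antichain_set_seq weight_set_seq // big_map.
Qed.
End VertexSets.

Theorem theorem2p9 (R : comRingType) (x y : R) (T : rtree) :
  Ppoly x y T = Lpoly x y T.
Proof. by rewrite Ppoly_antichain_sum Lpoly_antichain_sum. Qed.
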